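(* Let $f^*$ be a symmetric interpolation of a connectivity function $f$ on a finite set $V$. Let $S,T$ be disjoint subsets of $V$. If there exist distinct elements $a_1,\dots,a_\ell,b_1,\dots,b_\ell$ in $V-(S\cup T)$ such that (i) $f^*(S\cup\{a_i\},T\cup\{b_i\})>f^*(S,T)$ for all $i\in\{1,\dots,\ell\}$, (ii) $f^*(S\cup\{a_i\},T\cup\{b_j\})=f^*(S,T)$ for all $1\le i<j\le\ell$, (iii) $f^*(S\cup\{b_i\},T\cup\{a_j\})=f^*(S,T)$ for all $i,j\in\{1,\dots,\ell\}$, and (iv) $f^*(S\cup\{a_i\},T)=f^*(S,T\cup\{b_i\})=f^*(S,T)$ for all $i\in\{1,\dots,\ell\}$, then $\ell\le 2f^*(S,T)$.
   Context: A connectivity function on a finite set $V$ is a function $f:2^V\to\mathbb Z$ such that $f(X)=f(V-X)$ for all $X\subseteq V$, $f(X)+f(Y)\ge f(X\cup Y)+f(X\cap Y)$ for all $X,Y\subseteq V$, and $f(\emptyset)=0$. An interpolation of $f$ is a function $f^*$ defined on pairs $(X,Y)$ of disjoint subsets of $V$, with integer values, such that (i) $f^*(X,V-X)=f(X)$ for all $X\subseteq V$; (ii) if $C\cap D=\emptyset$, $A\subseteq C$, $B\subseteq D$ then $f^*(A,B)\le f^*(C,D)$; (iii) $f^*(A,B)+f^*(C,D)\ge f^*(A\cap C,B\cup D)+f^*(A\cup C,B\cap D)$ for all such pairs; (iv) $f^*(\emptyset,\emptyset)=f(\emptyset)$. The interpolation is symmetric if $f^*(X,Y)=f^*(Y,X)$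 for all disjoint $X,Y\subseteq V$. *)

From mathcomp Require Import all_boot all_order all_algebra.
Set Implicit Arguments. Unset Strict Implicit. Unset Printing Implicit Defensive.
Import Order.TTheory GRing.Theory Num.Theory.
Local Open Scope ring_scope.

Definition connectivity_function (V : finType) (f : {set V} -> int) : Prop :=
  [/\ forall X : {set V}, f X = f (~: X),
      forall X Y : {set V}, f (X :|: Y) + f (X :&: Y) <= f X + f Y
    & f set0 = 0].

(* f* is represented as a function on all pairs of subsets; only its values
   on pairs of disjoint subsets are constrained / used. *)
Definition interpolation (V : finType) (f : {set V} -> int)
    (fs : {set V} -> {set V} -> int) : Prop :=
  [/\ forall X : {set V}, fs X (~: X) = f X,
      forall A B C D : {set V}, [disjoint C & D] -> A \subset C -> B \subset D ->
        fs A B <= fs C D,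
      forall A B C D : {set V}, [disjoint A & B] -> [disjoint C & D] ->
        fs (A :&: C) (B :|: D) + fs (A :|: C) (B :&: D) <= fs A B + fs C D
    & fs set0 set0 = f set0].

Definition symmetric_interpolation (V : finType) (f : {set V} -> int)
    (fs : {set V} -> {set V} -> int) : Prop :=
  interpolation f fs /\
  forall X Y : {set V}, [disjoint X & Y] -> fs X Y = fs Y X.

(* Put k = f*(S,T), A = {a_i}, B_n = {b_j | j >= n} and X = S + T + A.
   The pair (S + a_n, T + B_(n+1)) still has value k by (ii) and (iv);
   uncrossing it with (X, B_n), the meet contains (S + a_n, T + b_n), of value
   > k by (i), so f*(X, B_(n+1)) < f*(X, B_n) and f*(X, B_0) >= l.
   Conversely (S, T + B_0) and, by (iii), (iv) and symmetry, (T + A, S + B_0)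
   both have value k, and uncrossing them bounds f*(X, B_0) by 2k. *)

From mathcomp Require Import all_boot all_order all_algebra.
From mathcomp Require Import zify.

Set Implicit Arguments.
Unset Strict Implicit.
Unset Printing Implicit Defensive.
Import Order.TTheory GRing.Theory Num.Theory.
Local Open Scope ring_scope.

Lemma disjoint_setUl (T : finType) (A B C : {set T}) :
  [disjoint A :|: B & C] = [disjoint A & C] && [disjoint B & C].
Proof. by rewrite -!setI_eq0 setIUl setU_eq0. Qed.

Lemma disjoint_setUr (T : finType) (A B C : {set T}) :
  [disjoint A & B :|: C] = [disjoint A & B] && [disjoint A & C].
Proof. by rewrite -!setI_eq0 setIUr setU_eq0. Qed.

Lemma setU1_subsetU (T : finType) (x : T) (X Y Z : {set T}) :
  x \in Z -> X \subset Y -> x |: X \subset Y :|: Z.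
Proof. by move=> Zx sXY; rewrite subUset sub1set inE Zx orbT subsetU ?sXY. Qed.

Section Interpolation.

Variables (V : finType) (f : {set V} -> int) (fs : {set V} -> {set V} -> int).
Hypothesis fsI : interpolation f fs.

Lemma fs_mono (A B C D : {set V}) :
  [disjoint C & D] -> A \subset C -> B \subset D -> fs A B <= fs C D.
Proof. by case: fsI => _ mono _ _; apply: mono. Qed.

Lemma fs_submod (A B C D : {set V}) : [disjoint A & B] -> [disjoint C & D] ->
  fs (A :&: C) (B :|: D) + fs (A :|: C) (B :&: D) <= fs A B + fs C D.
Proof. by case: fsI => _ _ submod _; apply: submod. Qed.

Lemma fs_ge0 (X Y : {set V}) : f set0 = 0 -> [disjoint X & Y] -> 0 <= fs X Y.
Proof.
case: fsI => _ _ _ fs00 f0 dXY; rewrite -f0 -fs00.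
exact: fs_mono dXY (sub0set _) (sub0set _).
Qed.

Lemma fs_submod_le (A B C D A' B' C' D' : {set V}) :
  [disjoint A & B] -> [disjoint C & D] ->
  A' \subset A :&: C -> B' \subset B :|: D ->
  C' \subset A :|: C -> D' \subset B :&: D ->
  fs A' B' + fs C' D' <= fs A B + fs C D.
Proof.
move=> dAB dCD sA' sB' sC' sD'; apply: le_trans (fs_submod dAB dCD).
apply: lerD; apply: fs_mono => //.
  by rewrite disjoint_setUr (disjointWl (subsetIl _ _) dAB)
    (disjointWl (subsetIr _ _) dCD).
by rewrite disjoint_setUl (disjointWr (subsetIl _ _) dAB)
  (disjointWr (subsetIr _ _) dCD).
Qed.

(* Submodularity makes the sets [Z] with [fs X (Y :|: Z) = fs X Y] closed under union. *)
Lemma fs_setUr_eq (X Y Z : {set V}) : [disjoint X & Y :|: Z] ->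
  {in Z, forall z, fs X (z |: Y) = fs X Y} -> fs X (Y :|: Z) = fs X Y.
Proof.
have [n] := ubnP #|Z|; elim: n Z => // n IH Z ltZn dXYZ flatZ.
have [-> | [z Zz]] := set_0Vmem Z; first by rewrite setU0.
have sYZ : Y \subset Y :|: Z := subsetUl _ _.
have dXzY := disjointWr (setU1_subsetU Zz (subxx Y)) dXYZ.
have dXYZz : [disjoint X & Y :|: Z :\ z].
  exact: disjointWr (setUS _ (subsetDl _ _)) dXYZ.
have flatZz : fs X (Y :|: Z :\ z) = fs X Y.
  apply: IH => // [|y /setD1P[_ /flatZ] //].
  by move: ltZn; rewrite (cardsD1 z) Zz.
have := fs_submod dXzY dXYZz.
rewrite setIid setUid flatZ // flatZz [z |: Y]setUC setUACA setUid setD1K //.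
have := fs_mono dXYZ (subxx X) sYZ.
have sYI : Y \subset (Y :|: [set z]) :&: (Y :|: Z :\ z) by rewrite subsetI !subsetUl.
have := fs_mono (disjointWr (subsetIr _ _) dXYZz) (subxx X) sYI.
lia.
Qed.

Hypothesis fs_sym : forall X Y : {set V}, [disjoint X & Y] -> fs X Y = fs Y X.

Lemma fs_setUl_eq (X Y Z : {set V}) : [disjoint X :|: Z & Y] ->
  {in Z, forall z, fs (z |: X) Y = fs X Y} -> fs (X :|: Z) Y = fs X Y.
Proof.
move=> dXZY flatZ; have dXY := disjointWl (subsetUl X Z) dXZY.
rewrite fs_sym // [RHS]fs_sym // fs_setUr_eq 1?disjoint_sym // => z Zz.
have dzXY := disjointWl (setU1_subsetU Zz (subxx X)) dXZY.
by rewrite -[LHS]fs_sym // -[RHS]fs_sym // flatZ.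
Qed.

Section CrossingPairs.

Variables (S T : {set V}) (l : nat) (a b : 'I_l -> V).
Hypotheses (f0 : f set0 = 0) (dST : [disjoint S & T]) (a_neq_b : forall i j, a i != b j).
Hypotheses (aST : forall i, a i \notin S :|: T) (bST : forall i, b i \notin S :|: T).
Hypothesis fs_ab_gt : forall i, fs S T < fs (a i |: S) (b i |: T).
Hypothesis fs_ab_lt_eq : forall i j : 'I_l, (i < j)%N -> fs (a i |: S) (b j |: T) = fs S T.
Hypothesis fs_ba_eq : forall i j, fs (b i |: S) (a j |: T) = fs S T.
Hypothesis fs_aS_eq : forall i, fs (a i |: S) T = fs S T.
Hypothesis fs_bT_eq : forall i, fs S (b i |: T) = fs S T.

Definition Aset := [set a i | i : 'I_l].
Definition Bfrom n := b @: [set j : 'I_l | (n <= j)%N].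

Lemma mem_Aset i : a i \in Aset.
Proof. exact: imset_f. Qed.

Lemma mem_Bfrom n (j : 'I_l) : (n <= j)%N -> b j \in Bfrom n.
Proof. by move=> le_nj; apply: imset_f; rewrite inE. Qed.

Lemma Bfrom_subset m n : (m <= n)%N -> Bfrom n \subset Bfrom m.
Proof.
move=> le_mn; apply/subsetP => _ /imsetP[j + ->]; rewrite inE => le_nj.
exact: mem_Bfrom (leq_trans le_mn le_nj).
Qed.

Lemma disjoint_Aset_ST : [disjoint Aset & S :|: T].
Proof. by rewrite disjoints_subset; apply/subsetP => _ /imsetP[i _ ->]; rewrite inE aST. Qed.

Lemma disjoint_Bfrom_ST : [disjoint Bfrom 0 & S :|: T].
Proof. by rewrite disjoints_subset; apply/subsetP => _ /imsetP[j _ ->]; rewrite inE bST. Qed.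

Lemma disjoint_Aset_Bfrom : [disjoint Aset & Bfrom 0].
Proof.
rewrite disjoints_subset; apply/subsetP => _ /imsetP[i _ ->]; rewrite inE.
by apply/imsetP => -[j _ /eqP]; rewrite (negbTE (a_neq_b i j)).
Qed.

Lemma disjoint_SA_TB : [disjoint S :|: Aset & T :|: Bfrom 0].
Proof.
rewrite disjoint_setUl !disjoint_setUr dST disjoint_Aset_Bfrom.
by rewrite (disjointWr (subsetUr S T) disjoint_Aset_ST) disjoint_sym
  (disjointWr (subsetUl S T) disjoint_Bfrom_ST).
Qed.

Lemma disjoint_SB_TA : [disjoint S :|: Bfrom 0 & T :|: Aset].
Proof.
rewrite disjoint_setUl !disjoint_setUr dST (disjointWr (subsetUr S T) disjoint_Bfrom_ST).
by rewrite disjoint_sym (disjointWr (subsetUl S T) disjoint_Aset_ST)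
  disjoint_sym disjoint_Aset_Bfrom.
Qed.

Lemma disjoint_STA_B : [disjoint S :|: T :|: Aset & Bfrom 0].
Proof.
by rewrite disjoint_setUl disjoint_Aset_Bfrom disjoint_sym disjoint_Bfrom_ST.
Qed.

Lemma fs_aS_TBfrom (i : 'I_l) : fs (a i |: S) (T :|: Bfrom i.+1) = fs S T.
Proof.
rewrite -(fs_aS_eq i) fs_setUr_eq //.
  apply: disjointW disjoint_SA_TB; first exact: setU1_subsetU (mem_Aset i) (subxx S).
  exact: setUS (Bfrom_subset _).
move=> _ /imsetP[j + ->]; rewrite inE => lt_ij.
by rewrite fs_aS_eq fs_ab_lt_eq.
Qed.

Lemma fs_Bfrom_ltS n : (n < l)%N ->
  fs (S :|: T :|: Aset) (Bfrom n.+1) < fs (S :|: T :|: Aset) (Bfrom n).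
Proof.
move=> lt_nl; pose i := Ordinal lt_nl.
have dAS_TB : [disjoint a i |: S & T :|: Bfrom n.+1].
  apply: disjointW disjoint_SA_TB; first exact: setU1_subsetU (mem_Aset i) (subxx S).
  exact: setUS (Bfrom_subset _).
have dSTA_B : [disjoint S :|: T :|: Aset & Bfrom n].
  exact: disjointWr (Bfrom_subset (leq0n n)) disjoint_STA_B.
have := fs_submod_le (A' := a i |: S) (B' := b i |: T) (C' := S :|: T :|: Aset)
  (D' := Bfrom n.+1) dAS_TB dSTA_B.
rewrite subsetI subxx (setU1_subsetU (mem_Aset i) (subsetUl S T)) subsetUr.
rewrite subsetI subsetUr Bfrom_subset //.
rewrite (setU1_subsetU (mem_Bfrom (j := i) (leqnn n)) (subsetUl _ _)).
rewrite fs_aS_TBfrom.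
have := fs_ab_gt i.
lia.
Qed.

Lemma fs_Bfrom0_ge_length : l%:Z <= fs (S :|: T :|: Aset) (Bfrom 0).
Proof.
suff chain d : (d <= l)%N -> d%:Z <= fs (S :|: T :|: Aset) (Bfrom (l - d)).
  by have := chain l (leqnn l); rewrite subnn.
elim: d => [_ | d IH lt_dl].
  exact: fs_ge0 f0 (disjointWr (Bfrom_subset (leq0n _)) disjoint_STA_B).
have lt_l : (l - d.+1 < l)%N by lia.
have := fs_Bfrom_ltS lt_l; rewrite subnSK //.
have := IH (ltnW lt_dl).
lia.
Qed.

Lemma disjoint_bS_aT i j : [disjoint b i |: S & a j |: T].
Proof.
apply: disjointW disjoint_SB_TA.
  exact: setU1_subsetU (mem_Bfrom (leq0n i)) (subxx S).
exact: setU1_subsetU (mem_Aset j) (subxx T).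
Qed.

Lemma fs_bS_eq i : fs (b i |: S) T = fs S T.
Proof.
apply/le_anti/andP; split.
  rewrite -(fs_ba_eq i i).
  exact: fs_mono (disjoint_bS_aT i i) (subxx _) (subsetUr _ _).
exact: fs_mono (disjointWr (subsetUr _ _) (disjoint_bS_aT i i)) (subsetUr _ _) (subxx _).
Qed.

Lemma fs_aT_eq j : fs S (a j |: T) = fs S T.
Proof.
apply/le_anti/andP; split.
  rewrite -(fs_ba_eq j j).
  exact: fs_mono (disjoint_bS_aT j j) (subsetUr _ _) (subxx _).
exact: fs_mono (disjointWl (subsetUr _ _) (disjoint_bS_aT j j)) (subxx _) (subsetUr _ _).
Qed.

Lemma fs_SB_TA : fs (S :|: Bfrom 0) (T :|: Aset) = fs S T.
Proof.
have dSB_T := disjointWr (subsetUl T Aset) disjoint_SB_TA.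
rewrite fs_setUr_eq ?disjoint_SB_TA //.
  by rewrite fs_setUl_eq // => _ /imsetP[i _ ->]; apply: fs_bS_eq.
move=> _ /imsetP[j _ ->].
have dSB_aT : [disjoint S :|: Bfrom 0 & a j |: T].
  exact: disjointWr (setU1_subsetU (mem_Aset j) (subxx T)) disjoint_SB_TA.
rewrite (fs_setUl_eq dSB_aT) ?(fs_setUl_eq dSB_T) ?fs_aT_eq // => _ /imsetP[i _ ->].
  exact: fs_bS_eq.
exact: fs_ba_eq.
Qed.

Lemma fs_Bfrom0_le_double : fs (S :|: T :|: Aset) (Bfrom 0) <= 2 * fs S T.
Proof.
have dS_TB : [disjoint S & T :|: Bfrom 0] := disjointWl (subsetUl S Aset) disjoint_SA_TB.
have dTA_SB : [disjoint T :|: Aset & S :|: Bfrom 0] by rewrite disjoint_sym disjoint_SB_TA.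
have := fs_submod_le (A' := set0) (B' := set0) (C' := S :|: T :|: Aset)
  (D' := Bfrom 0) dS_TB dTA_SB (sub0set _) (sub0set _).
rewrite setUA subxx subsetI !subsetUr (fs_sym dTA_SB) fs_SB_TA.
rewrite fs_setUr_eq // => [|_ /imsetP[j _ ->]]; last exact: fs_bT_eq.
have := fs_ge0 f0 (disjointW (sub0set S) (sub0set T) dST).
lia.
Qed.

End CrossingPairs.

End Interpolation.

Theorem lemma4p1 (V : finType) (f : {set V} -> int)
    (fs : {set V} -> {set V} -> int) (S T : {set V}) (l : nat)
    (a b : 'I_l -> V) :
  connectivity_function f ->
  symmetric_interpolation f fs ->
  [disjoint S & T] ->
  injective a -> injective b -> (forall i j, a i != b j) ->
  (forall i, a i \notin S :|: T) -> (forall i, b i \notin S :|: T) ->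
  (forall i, fs (a i |: S) (b i |: T) > fs S T) ->
  (forall i j : 'I_l, (i < j)%N -> fs (a i |: S) (b j |: T) = fs S T) ->
  (forall i j, fs (b i |: S) (a j |: T) = fs S T) ->
  (forall i, fs (a i |: S) T = fs S T /\ fs S (b i |: T) = fs S T) ->
  (l%:Z <= 2 * fs S T).
Proof.
move=> [_ _ f0] [fsI fs_sym] dST _ _ a_neq_b aST bST fs_ab_gt fs_ab_lt_eq fs_ba_eq fs_a_b.
have fs_aS_eq i := (fs_a_b i).1; have fs_bT_eq i := (fs_a_b i).2.
apply: le_trans
  (fs_Bfrom0_ge_length fsI f0 dST a_neq_b aST bST fs_ab_gt fs_ab_lt_eq fs_aS_eq)
  (fs_Bfrom0_le_double fsI fs_sym f0 dST a_neq_b aST bST fs_ba_eq fs_bT_eq).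
Qed.
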